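(* Let $\mathcal V$ be a multivector field on $X$ and let $C\subset X$ be a strongly connected component of the digraph $G_{\mathcal V}$ such that there exists an essential full solution with image contained in $C$. Then $C$ is an isolated invariant set.
   Context: $X$ is a finite $T_0$ topological space. For $A\subset X$, $\operatorname{cl}A$ is its closure and $\operatorname{mo}A:=\operatorname{cl}A\setminus A$. $A$ is locally closed if it is the intersection of an open and a closed subset of $X$. $H$ denotes relative singular homology. A multivector is a nonempty locally closed subset of $X$; a multivector field $\mathcal V$ on $X$ is a partition of $X$ into multivectors. For $x\in X$, $[x]$ denotes the element of $\mathcal V$ containing $x$. A multivector $V$ is critical if $H(\operatorname{cl}V,\operatorname{mo}V)\neq0$, regular otherwise. Put $\Pi_{\mathcal V}(x):=[x]\cup\operatorname{cl}\{x\}$ and $\Pi_{\mathcal V}(A):=\bigcup_{x\in A}\Pi_{\mathcal V}(x)$. $G_{\mathcal V}$ is the digraph with vertex set $X$ and an edge $x\to y$ iff $y\in\Pi_{\mathcal V}(x)$; its strongly connected components are the equivalence classes of the relation ''there is a directed path from $x$ to $y$ and from $y$ to $x$''. A $\mathbb Z$-interval is $\mathbb Z\cap I$ for a real interval $I$. A solution in $A\subset X$ is a map $\varphi:D\to A$ on a $\mathbb Z$-interval $D$ with $\varphi(i+1)\in\Pi_{\mathcal V}(\varphi(i))$ whenever $i,i+1\in D$; it is full if $D=\mathbb Z$, and a path if $D$ is bounded, its endpoints being $\varphi(\min D)$ and $\varphi(\max D)$. A full solution $\varphi$ is essential if for every $t\in\mathbb Z$ with $[\varphi(t)]$ regular,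 the set $\{s\in\mathbb Z:\varphi(s)\notin[\varphi(t)]\}$ is unbounded below and unbounded above. $\operatorname{Inv}A$ is the set of $x\in A$ such that there is an essential full solution $\varphi$ with image in $A$ and $\varphi(0)=x$; $A$ is invariant if $\operatorname{Inv}A=A$. A closed set $N$ isolates an invariant set $S\subset N$ if (a) every path in $N$ with both endpoints in $S$ has image contained in $S$, and (b) $\Pi_{\mathcal V}(S)\subset N$. An invariant set is an isolated invariant set if some closed set isolates it. *)

From mathcomp Require Import all_boot all_order all_algebra.
Set Implicit Arguments. Unset Strict Implicit. Unset Printing Implicit Defensive.
Import Order.TTheory GRing.Theory Num.Theory.
Local Open Scope ring_scope.

Section FiniteTop.
Variable T : finType.

(* A topology on the finite set T, given by its family of open sets
   (finite, so closure under binary unions/intersections suffices). *)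
Definition is_topology (O : {set {set T}}) : Prop :=
  [/\ set0 \in O, setT \in O,
      (forall A B, A \in O -> B \in O -> A :|: B \in O) &
      (forall A B, A \in O -> B \in O -> A :&: B \in O)].

Definition is_T0 (O : {set {set T}}) : Prop :=
  forall x y : T, x != y -> exists2 U, U \in O & (x \in U) != (y \in U).

Definition is_closed (O : {set {set T}}) (A : {set T}) : bool := ~: A \in O.

Definition cl (O : {set {set T}}) (A : {set T}) : {set T} :=
  \bigcap_(B | is_closed O B && (A \subset B)) B.

Definition mo (O : {set {set T}}) (A : {set T}) : {set T} := cl O A :\: A.

Definition locally_closed (O : {set {set T}}) (A : {set T}) : Prop :=
  exists U F, [/\ U \in O, is_closed O F & A = U :&: F].

Definition multivector (O : {set {set T}}) (A : {set T}) : Prop :=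
  A != set0 /\ locally_closed O A.

Definition mvfield (O : {set {set T}}) (V : {set {set T}}) : Prop :=
  partition V [set: T] /\ (forall A, A \in V -> multivector O A).

Definition cell (V : {set {set T}}) (x : T) : {set T} := pblock V x.

Definition Pi (O : {set {set T}}) (V : {set {set T}}) (x : T) : {set T} :=
  cell V x :|: cl O [set x].

Definition PiS (O : {set {set T}}) (V : {set {set T}}) (A : {set T}) : {set T} :=
  \bigcup_(x in A) Pi O V x.

Definition Gedge (O : {set {set T}}) (V : {set {set T}}) : rel T :=
  fun x y => y \in Pi O V x.

Definition is_scc (O : {set {set T}}) (V : {set {set T}}) (C : {set T}) : Prop :=
  exists x, C = [set y | connect (Gedge O V) x y && connect (Gedge O V) y x].

Definition full_solution (O : {set {set T}}) (V : {set {set T}}) (phi : int -> T) : Prop :=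
  forall t : int, phi (t + 1) \in Pi O V (phi t).

Definition essential (V : {set {set T}}) (crit : {set T} -> bool) (phi : int -> T) : Prop :=
  forall t : int, ~~ crit (cell V (phi t)) ->
    (forall n : int, exists2 s : int, s <= n & phi s \notin cell V (phi t)) /\
    (forall n : int, exists2 s : int, n <= s & phi s \notin cell V (phi t)).

Definition in_Inv (O : {set {set T}}) (V : {set {set T}}) (crit : {set T} -> bool)
  (A : {set T}) (x : T) : Prop :=
  x \in A /\ exists phi : int -> T,
    [/\ full_solution O V phi, essential V crit phi, (forall t, phi t \in A) & phi 0 = x].

Definition invariant (O : {set {set T}}) (V : {set {set T}}) (crit : {set T} -> bool)
  (A : {set T}) : Prop :=
  forall x, x \in A <-> in_Inv O V crit A x.

Definition is_path (O : {set {set T}}) (V : {set {set T}}) (a b : int) (phi : int -> T) : Prop :=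
  a <= b /\ forall i : int, a <= i -> i < b -> phi (i + 1) \in Pi O V (phi i).

Definition isolates (O : {set {set T}}) (V : {set {set T}}) (N S : {set T}) : Prop :=
  [/\ is_closed O N, S \subset N,
      (forall (a b : int) (phi : int -> T), is_path O V a b phi ->
         (forall i, a <= i -> i <= b -> phi i \in N) ->
         phi a \in S -> phi b \in S ->
         forall i, a <= i -> i <= b -> phi i \in S) &
      PiS O V S \subset N].

Definition isolated_invariant (O : {set {set T}}) (V : {set {set T}}) (crit : {set T} -> bool)
  (S : {set T}) : Prop :=
  invariant O V crit S /\ exists N, isolates O V N S.

End FiniteTop.

From Pilot Require Import Defs.
From mathcomp Require Import all_boot all_order all_algebra zify.
Set Implicit Arguments. Unset Strict Implicit. Unset Printing Implicit Defensive.
Import Order.TTheory GRing.Theory Num.Theory.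
Local Open Scope ring_scope.

(* Since every x lies in cl {x}, the graph G_V is reflexive, so through any
   point y of the strongly connected component C there is a closed walk visiting
   all of C; repeating it periodically gives a full solution through y inside C.
   It is essential: a regular multivector W containing all of C would trap the
   given essential solution, so the periodic solution keeps returning to a point
   of C outside W in both time directions.  Isolation is by N = X, which is
   closed: a path in X between two points of C stays in C because C is a
   strongly connected component. *)

Section StronglyConnectedComponent.
Variables (T : finType) (e : rel T).

Definition scc (r : T) : {set T} := [set y | connect e r y && connect e y r].

Lemma scc_between r a b z : a \in scc r -> b \in scc r ->
  connect e a z -> connect e z b -> z \in scc r.
Proof.
rewrite !inE => /andP[ra _] /andP[_ br] az zb.
by rewrite (connect_trans ra az) (connect_trans zb br).
Qed.

Lemma closed_walk_sub_scc r x s : x \in scc r -> path e x s -> last x s = x ->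
  {subset x :: s <= scc r}.
Proof.
move=> xC walk closed z zs; apply: (scc_between xC xC); first exact: path_connect zs.
case/splitPl: zs walk closed => p1 p2 <-.
rewrite cat_path last_cat => /andP[_ walk2] closed.
by have := path_connect walk2 (mem_last _ p2); rewrite closed.
Qed.

Lemma closed_walk_cover x (L : seq T) : e x x ->
  {in L, forall z, connect e x z && connect e z x} ->
  exists s, [/\ path e x s, last x s = x, (0 < size s)%N & {subset L <= x :: s}].
Proof.
move=> exx; elim: L => [|z L IH] Lconn; first by exists [:: x]; rewrite /= exx.
have [y yL|s [walk closed s_gt0 Ls]] := IH; first by apply: Lconn; rewrite inE yL orbT.
have /andP[/connectP[p xp zp] /connectP[q zq xq]] := Lconn z (mem_head z L).
exists (s ++ p ++ q); split.
- by rewrite !cat_path walk closed xp -zp zq.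
- by rewrite !last_cat closed -zp.
- by rewrite size_cat addn_gt0 s_gt0.
- have zs : z \in x :: p by rewrite zp mem_last.
  move=> y; rewrite inE => /orP[/eqP->|/Ls]; last first.
    by rewrite !inE mem_cat => /orP[]->; rewrite ?orbT.
  by move: zs; rewrite !inE !mem_cat => /orP[]->; rewrite ?orbT.
Qed.

End StronglyConnectedComponent.

Section ClosedWalkUnrolling.
Variables (T : eqType) (e : rel T) (x : T) (s : seq T).

Definition unroll (t : int) : T := nth x (x :: s) `|(t %% (size s)%:Z)%Z|%N.

Hypotheses (walk : path e x s) (closed : last x s = x) (s_gt0 : (0 < size s)%N).

Lemma unroll_period q (j : nat) : (j <= size s)%N ->
  unroll (q * (size s)%:Z + j%:Z) = nth x (x :: s) j.
Proof.
rewrite /unroll modzMDl modz_nat absz_nat leq_eqVlt => /orP[/eqP->|/modn_small->//].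
by rewrite modnn; have := nth_last x (x :: s); rewrite /= closed.
Qed.

Lemma unroll_index_lt t : (`|(t %% (size s)%:Z)%Z|%N < size s)%N.
Proof.
have n_gt0 : 0 < (size s)%:Z by rewrite ltz_nat.
by rewrite -ltz_nat gez0_abs ?ltz_pmod ?modz_ge0 ?gt_eqF.
Qed.

Lemma mem_unroll t : unroll t \in x :: s.
Proof. by apply: mem_nth; rewrite ltnS ltnW ?unroll_index_lt. Qed.

Lemma unroll0 : unroll 0 = x.
Proof. by rewrite /unroll mod0z. Qed.

Lemma unroll_step t : e (unroll t) (unroll (t + 1)).
Proof.
set n := (size s)%:Z; set k := `|(t %% n)%Z|%N.
have k_lt : (k < size s)%N := unroll_index_lt t.
have tE : t = (t %/ n)%Z * n + k%:Z.
  by rewrite {1}(divz_eq t n) gez0_abs // modz_ge0 // gt_eqF // ltz_nat.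
have -> : t + 1 = (t %/ n)%Z * n + k.+1%:Z by rewrite {1}tE; lia.
by rewrite unroll_period //; apply: (pathP x walk).
Qed.

Lemma unroll_recurrent y : y \in x :: s -> forall m : int,
  (exists2 u, u <= m & unroll u = y) /\ (exists2 u, m <= u & unroll u = y).
Proof.
move=> ys m; set n := (size s)%:Z; set j := index y (x :: s).
have js : (j <= size s)%N by rewrite -ltnS -[(size s).+1]/(size (x :: s)) index_mem.
have n_gt0 : 0 < n by rewrite ltz_nat.
set q := ((m - j%:Z) %/ n)%Z; set qn := q * n.
have mE : m - j%:Z = qn + ((m - j%:Z) %% n)%Z := divz_eq _ _.
have r_ge0 : 0 <= ((m - j%:Z) %% n)%Z by rewrite modz_ge0 // gt_eqF.
have r_lt : ((m - j%:Z) %% n)%Z < n by rewrite ltz_pmod.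
split; [exists (q * n + j%:Z) | exists ((q + 1) * n + j%:Z)];
  rewrite ?unroll_period ?nth_index ?mulrDl ?mul1r -/qn //; lia.
Qed.

End ClosedWalkUnrolling.

Lemma connect_int_walk (T : finType) (e : rel T) (phi : int -> T) (a b : int) :
  (forall i, a <= i -> i < b -> e (phi i) (phi (i + 1))) ->
  forall i j, a <= i -> i <= j -> j <= b -> connect e (phi i) (phi j).
Proof.
move=> step i j ai ij jb.
suff walk k : i + k%:Z <= b -> connect e (phi i) (phi (i + k%:Z)).
  have jE : j = i + `|j - i|%N%:Z by lia.
  by rewrite jE; apply: walk; rewrite -jE.
elim: k => [|k IH] ik; first by rewrite addr0 connect0.
have -> : i + k.+1%:Z = i + k%:Z + 1 by lia.
by apply: connect_trans (IH _) (connect1 (step _ _ _)); lia.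
Qed.

Section MultivectorField.
Variables (T : finType) (O : {set {set T}}) (V : {set {set T}}).
Variable crit : {set T} -> bool.

Lemma mem_cl_set1 x : x \in cl O [set x].
Proof. by apply/bigcapP => B /andP[_ /subsetP]; apply; rewrite set11. Qed.

Lemma Gedge_refl : reflexive (Gedge O V).
Proof. by move=> x; rewrite /Gedge /Pi inE mem_cl_set1 orbT. Qed.

Lemma essential_not_in_regular phi W : partition V [set: T] ->
  essential V crit phi -> W \in V -> ~~ crit W -> ~ (forall t, phi t \in W).
Proof.
case/and3P=> _ triv _ ess WV W_reg inW.
have cell0 : cell V (phi 0) = W by apply: def_pblock.
by move: (ess 0); rewrite cell0 => /(_ W_reg) [/(_ 0) [u _]]; rewrite inW.
Qed.

(* Qualified because eqtype also defines [invariant]. *)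
Lemma scc_invariant r phi : partition V [set: T] ->
  essential V crit phi -> (forall t, phi t \in scc (Gedge O V) r) ->
  Defs.invariant O V crit (scc (Gedge O V) r).
Proof.
set e := Gedge O V; set C := scc e r => partV ess phiC y.
split=> [yC|[] //]; split=> //.
have [s [walk closed s_gt0 Cs]] : exists s, [/\ path e y s, last y s = y,
    (0 < size s)%N & {subset enum C <= y :: s}].
  apply: closed_walk_cover => [|z]; first exact: Gedge_refl.
  move: yC; rewrite mem_enum !inE => /andP[ry yr] /andP[rz zr].
  by rewrite (connect_trans yr rz) (connect_trans zr ry).
exists (unroll y s); split.
- exact: unroll_step walk closed s_gt0.
- move=> t; set W := cell V (unroll y s t) => W_reg.
  have WV : W \in V by apply: pblock_mem; rewrite (cover_partition partV) inE.
  have /subsetPn[z zC zW] : ~~ (C \subset W).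
    apply/negP => /subsetP CW.
    by apply: (essential_not_in_regular partV ess WV W_reg) => u; apply: CW.
  have zs : z \in y :: s by rewrite Cs ?mem_enum.
  split=> m; have [[u um uz] [v mv vz]] := unroll_recurrent walk closed s_gt0 zs m.
    by exists u; rewrite ?uz.
  by exists v; rewrite ?vz.
- by move=> t; apply: closed_walk_sub_scc yC walk closed _ (mem_unroll _ _ _).
- exact: unroll0.
Qed.

Lemma scc_isolated_by_setT r : is_topology O ->
  isolates O V [set: T] (scc (Gedge O V) r).
Proof.
case=> O0 _ _ _; split; rewrite ?subsetT //; first by rewrite /is_closed setCT.
move=> a b phi [_ step] _ aC bC i ai ib.
by apply: (scc_between aC bC); apply: (connect_int_walk step); rewrite ?lexx.
Qed.

End MultivectorField.

Theorem theorem4p15 (T : finType) (O : {set {set T}})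
  (hO : is_topology O) (hT0 : is_T0 O)
  (crit : {set T} -> bool)
  (V : {set {set T}}) (hV : mvfield O V)
  (C : {set T}) (hC : is_scc O V C)
  (hess : exists phi : int -> T,
     [/\ full_solution O V phi, essential V crit phi & forall t, phi t \in C]) :
  isolated_invariant O V crit C.
Proof.
case: hV => partV _; case: hC hess => r -> [phi [_ ess phiC]].
split; first exact: scc_invariant partV ess phiC.
by exists [set: T]; apply: scc_isolated_by_setT.
Qed.
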